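(* In the algebra $\mathcal O_q$ defined in the context, for all $n\in\mathbb N$: $$\mathcal W_{n+1}=-(q-q^{-1})^{-1}\sum_{k=0}^n\sum_{\ell=0}^k\binom{k}{\ell}q^{k-2\ell}[2]_q^{-k-2}\tilde B_{(k-2\ell)\delta+\alpha_0}\mathcal G_{n-k},$$ $$\mathcal W_{-n}=-(q-q^{-1})^{-1}\sum_{k=0}^n\sum_{\ell=0}^k\binom{k}{\ell}q^{2\ell-k}[2]_q^{-k-2}\tilde B_{(k-2\ell)\delta+\alpha_1}\mathcal G_{n-k}.$$
   Context: All algebras are associative and unital over a field $\mathbb F$; $q\in\mathbb F$ is nonzero and not a root of unity; $[n]_q=(q^n-q^{-n})/(q-q^{-1})$. For elements $X,Y$ of an algebra, $[X,Y]=XY-YX$ and $[X,Y]_q=qXY-q^{-1}YX$. Let $\rho=-(q^2-q^{-2})^2$. The algebra $\mathcal O_q$ is defined by generators $\mathcal W_{-k},\mathcal W_{k+1},\mathcal G_{k+1},\tilde{\mathcal G}_{k+1}$ ($k\in\mathbb N$) and the following relations for all $k,\ell\in\mathbb N$: $[\mathcal W_0,\mathcal W_{k+1}]=[\mathcal W_{-k},\mathcal W_1]=(\tilde{\mathcal G}_{k+1}-\mathcal G_{k+1})/(q+q^{-1})$; $[\mathcal W_0,\mathcal G_{k+1}]_q=[\tilde{\mathcal G}_{k+1},\mathcal W_0]_q=\rho\mathcal W_{-k-1}-\rho\mathcal W_{k+1}$; $[\mathcal G_{k+1},\mathcal W_1]_q=[\mathcal W_1,\tilde{\mathcal G}_{k+1}]_q=\rho\mathcal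 W_{k+2}-\rho\mathcal W_{-k}$; $[\mathcal W_{-k},\mathcal W_{-\ell}]=0$, $[\mathcal W_{k+1},\mathcal W_{\ell+1}]=0$; $[\mathcal W_{-k},\mathcal W_{\ell+1}]+[\mathcal W_{k+1},\mathcal W_{-\ell}]=0$; $[\mathcal W_{-k},\mathcal G_{\ell+1}]+[\mathcal G_{k+1},\mathcal W_{-\ell}]=0$; $[\mathcal W_{-k},\tilde{\mathcal G}_{\ell+1}]+[\tilde{\mathcal G}_{k+1},\mathcal W_{-\ell}]=0$; $[\mathcal W_{k+1},\mathcal G_{\ell+1}]+[\mathcal G_{k+1},\mathcal W_{\ell+1}]=0$; $[\mathcal W_{k+1},\tilde{\mathcal G}_{\ell+1}]+[\tilde{\mathcal G}_{k+1},\mathcal W_{\ell+1}]=0$; $[\mathcal G_{k+1},\mathcal G_{\ell+1}]=0$, $[\tilde{\mathcal G}_{k+1},\tilde{\mathcal G}_{\ell+1}]=0$; $[\tilde{\mathcal G}_{k+1},\mathcal G_{\ell+1}]+[\mathcal G_{k+1},\tilde{\mathcal G}_{\ell+1}]=0$. Convention: $\mathcal G_0=-(q-q^{-1})[2]_q^2$. Define $\tilde B_\delta=q^{-2}\mathcal W_0\mathcal W_1-\mathcal W_1\mathcal W_0$; $\tilde B_{\alpha_0}=\mathcal W_1$, $\tilde B_{\delta+\alpha_0}=\mathcal W_0+\frac{q[\tilde B_\delta,\mathcal W_1]}{(q-q^{-1})(q^2-q^{-2})}$, $\tilde B_{n\delta+\alpha_0}=\tilde B_{(n-2)\delta+\alpha_0}+\frac{q[\tilde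 B_\delta,\tilde B_{(n-1)\delta+\alpha_0}]}{(q-q^{-1})(q^2-q^{-2})}$ for $n\ge2$; $\tilde B_{\alpha_1}=\mathcal W_0$, $\tilde B_{\delta+\alpha_1}=\mathcal W_1-\frac{q[\tilde B_\delta,\mathcal W_0]}{(q-q^{-1})(q^2-q^{-2})}$, $\tilde B_{n\delta+\alpha_1}=\tilde B_{(n-2)\delta+\alpha_1}-\frac{q[\tilde B_\delta,\tilde B_{(n-1)\delta+\alpha_1}]}{(q-q^{-1})(q^2-q^{-2})}$ for $n\ge2$. For negative integers $k$, set $\tilde B_{k\delta+\alpha_0}=\tilde B_{(-k-1)\delta+\alpha_1}$ and $\tilde B_{k\delta+\alpha_1}=\tilde B_{(-k-1)\delta+\alpha_0}$. *)

From HB Require Import structures.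
From mathcomp Require Import all_boot all_order all_algebra.
Set Implicit Arguments. Unset Strict Implicit. Unset Printing Implicit Defensive.
Import Order.TTheory GRing.Theory Num.Theory.
Local Open Scope ring_scope.

(* Generators of O_q are encoded as:
     W  : int -> A      with  W z  = calW_z  (z = -k for k in N, z = k+1 for k in N: all of Z)
     G  : nat -> A      with  G (k+1) = calG_{k+1}   (value G 0 unused)
     Gt : nat -> A      with  Gt (k+1) = tilde calG_{k+1} (value Gt 0 unused) *)

Definition qnot_root_of_unity {F : fieldType} (q : F) : Prop :=
  forall n : nat, (0 < n)%N -> q ^+ n != 1.

Definition qint {F : fieldType} (q : F) (n : nat) : F :=
  (q ^+ n - q ^- n) / (q - q^-1).

Definition comm {R : pzRingType} (X Y : R) : R := X * Y - Y * X.

Definition qcomm {F : fieldType} {A : algType F} (q : F) (X Y : A) : A :=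
  q *: (X * Y) - q^-1 *: (Y * X).

Definition rho {F : fieldType} (q : F) : F := - (q ^+ 2 - q ^- 2) ^+ 2.

Definition Oq_relations {F : fieldType} {A : algType F} (q : F)
    (W : int -> A) (G Gt : nat -> A) : Prop :=
  forall k l : nat,
     comm (W 0) (W k.+1%:Z) = (q + q^-1)^-1 *: (Gt k.+1 - G k.+1)
  /\ comm (W (- k%:Z)) (W 1) = (q + q^-1)^-1 *: (Gt k.+1 - G k.+1)
  /\ qcomm q (W 0) (G k.+1) = rho q *: W (- k.+1%:Z) - rho q *: W k.+1%:Z
  /\ qcomm q (Gt k.+1) (W 0) = rho q *: W (- k.+1%:Z) - rho q *: W k.+1%:Z
  /\ qcomm q (G k.+1) (W 1) = rho q *: W k.+2%:Z - rho q *: W (- k%:Z)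
  /\ qcomm q (W 1) (Gt k.+1) = rho q *: W k.+2%:Z - rho q *: W (- k%:Z)
  /\ comm (W (- k%:Z)) (W (- l%:Z)) = 0
  /\ comm (W k.+1%:Z) (W l.+1%:Z) = 0
  /\ comm (W (- k%:Z)) (W l.+1%:Z) + comm (W k.+1%:Z) (W (- l%:Z)) = 0
  /\ comm (W (- k%:Z)) (G l.+1) + comm (G k.+1) (W (- l%:Z)) = 0
  /\ comm (W (- k%:Z)) (Gt l.+1) + comm (Gt k.+1) (W (- l%:Z)) = 0
  /\ comm (W k.+1%:Z) (G l.+1) + comm (G k.+1) (W l.+1%:Z) = 0
  /\ comm (W k.+1%:Z) (Gt l.+1) + comm (Gt k.+1) (W l.+1%:Z) = 0
  /\ comm (G k.+1) (G l.+1) = 0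
  /\ comm (Gt k.+1) (Gt l.+1) = 0
  /\ comm (Gt k.+1) (G l.+1) + comm (G k.+1) (Gt l.+1) = 0.

Definition Gc {F : fieldType} {A : algType F} (q : F) (G : nat -> A) (n : nat) : A :=
  if n is 0 then (- (q - q^-1) * qint q 2 ^+ 2) %:A else G n.

Section Bt.
Variables (F : fieldType) (A : algType F) (q : F) (W : int -> A).

Definition Bdelta : A := q ^- 2 *: (W 0 * W 1) - W 1 * W 0.

Definition cB : F := q / ((q - q^-1) * (q ^+ 2 - q ^- 2)).

(* B0 n = tilde B_{n delta + alpha_0}, n in N *)
Fixpoint B0 (n : nat) : A :=
  match n with
  | 0 => W 1
  | 1 => W 0 + cB *: comm Bdelta (W 1)
  | S ((S m) as m1) => B0 m + cB *: comm Bdelta (B0 m1)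
  end.

(* B1 n = tilde B_{n delta + alpha_1}, n in N *)
Fixpoint B1 (n : nat) : A :=
  match n with
  | 0 => W 0
  | 1 => W 1 - cB *: comm Bdelta (W 0)
  | S ((S m) as m1) => B1 m - cB *: comm Bdelta (B1 m1)
  end.

(* integer-indexed versions: for negative k, B_{k delta+alpha0} = B_{(-k-1) delta+alpha1} etc.
   Note Negz n = -(n+1), so -k-1 = n. *)
Definition Bt0 (z : int) : A := match z with Posz n => B0 n | Negz n => B1 n end.
Definition Bt1 (z : int) : A := match z with Posz n => B1 n | Negz n => B0 n end.
End Bt.

(* The element Z = G_1 + q Bdelta commutes with every W_z: the relations pairing G_1
   and Gt_1 with W_{k+1} and W_{-k} turn [G_1, W_z] into a commutator of W_z with
   [W_1, W_0]_q = -q Bdelta or with [W_0, W_1]_q.  Feeding the resulting identities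
   [G_{k+1}, W_0] = -q [Bdelta, W_{-k}] and [G_{k+1}, W_1] = -q [Bdelta, W_{k+1}]
   into the q-commutator relations expresses W_{k+2} and W_{-k-1} through W_{-k},
   W_{k+1}, W_1 G_{k+1}, W_0 G_{k+1} and one application of ad Bdelta.  Applying
   ad Z to the q-commutator relations shows that [Bdelta, G_j] is annihilated on
   the left by W_0 and W_1, hence by every B-element, so ad Bdelta passes through
   the convolutions sum_k X_k G_{n-k}.  On the B-elements ad Bdelta is their
   defining three-term recursion, and the combinations
   sum_l C(k,l) q^(k-2l) B_{(k-2l+s) delta + alpha_0} satisfy the matching
   Pascal-type recursion in k; induction on n gives both expansions. *)

From mathcomp Require Import all_boot all_order all_algebra.
From mathcomp Require Import zify ring.
Import Order.TTheory GRing.Theory Num.Theory.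
Local Open Scope ring_scope.

Section Commutators.
Context {F : fieldType} {A : algType F}.
Implicit Types (q : F) (x y z : A).

Lemma commDr x y z : comm x (y + z) = comm x y + comm x z.
Proof. by rewrite /comm mulrDr mulrDl opprD addrACA. Qed.

Lemma commNr x y : comm x (- y) = - comm x y.
Proof. by rewrite /comm mulrN mulNr opprK opprB addrC. Qed.

Lemma commBr x y z : comm x (y - z) = comm x y - comm x z.
Proof. by rewrite commDr commNr. Qed.

Lemma commDl x y z : comm (x + y) z = comm x z + comm y z.
Proof. by rewrite /comm mulrDl mulrDr opprD addrACA. Qed.

Lemma commNl x y : comm (- x) y = - comm x y.
Proof. by rewrite /comm mulrN mulNr opprK opprB addrC. Qed.

Lemma commBl x y z : comm (x - y) z = comm x z - comm y z.
Proof. by rewrite commDl commNl. Qed.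

Lemma commZl (a : F) x y : comm (a *: x) y = a *: comm x y.
Proof. by rewrite /comm -scalerAr -scalerAl scalerBr. Qed.

Lemma commZr (a : F) x y : comm x (a *: y) = a *: comm x y.
Proof. by rewrite /comm -scalerAr -scalerAl scalerBr. Qed.

Lemma comm_sumr x (I : Type) (r : seq I) (P : pred I) (f : I -> A) :
  comm x (\sum_(i <- r | P i) f i) = \sum_(i <- r | P i) comm x (f i).
Proof. by rewrite /comm mulr_sumr mulr_suml -sumrB. Qed.

Lemma qcommDr q x y z : qcomm q x (y + z) = qcomm q x y + qcomm q x z.
Proof. by rewrite /qcomm mulrDr mulrDl !scalerDr opprD addrACA. Qed.

Lemma qcommZr q (a : F) x y : qcomm q x (a *: y) = a *: qcomm q x y.
Proof.
by rewrite /qcomm -scalerAr -scalerAl !scalerA mulrC [q^-1 * a]mulrC -!scalerA scalerBr.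
Qed.

Lemma commC x y : comm x y = - comm y x.
Proof. by rewrite /comm opprB. Qed.

Lemma commMr x y z : comm x (y * z) = comm x y * z + y * comm x z.
Proof. by rewrite /comm mulrBl mulrBr !mulrA addrA subrK. Qed.

Lemma commMl x y z : comm (x * y) z = x * comm y z + comm x z * y.
Proof. by rewrite /comm mulrBr mulrBl !mulrA addrA subrK. Qed.

Lemma comm_scalar x (a : F) : comm x a%:A = 0.
Proof. by rewrite /comm mulr_algl mulr_algr subrr. Qed.

Lemma qcomm0l q x : qcomm q 0 x = 0.
Proof. by rewrite /qcomm mul0r mulr0 !scaler0 subrr. Qed.

Lemma comm0r x : comm x 0 = 0.
Proof. by rewrite /comm mul0r mulr0 subrr. Qed.

Lemma comm0l x : comm 0 x = 0.
Proof. by rewrite /comm mul0r mulr0 subrr. Qed.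

Lemma qcomm0r q x : qcomm q x 0 = 0.
Proof. by rewrite /qcomm mul0r mulr0 !scaler0 subrr. Qed.

Lemma qcomm1 x y : qcomm 1 x y = comm x y.
Proof. by rewrite /qcomm invr1 !scale1r. Qed.

Lemma qcommE q x y : qcomm q x y = (q - q^-1) *: (x * y) + q^-1 *: comm x y.
Proof. by rewrite /qcomm /comm scalerBl scalerBr subrKA. Qed.

Lemma qcommEC q x y : qcomm q x y = (q - q^-1) *: (y * x) + q *: comm x y.
Proof. by rewrite /qcomm /comm scalerBl scalerBr [RHS]addrC subrKA. Qed.

Lemma qcomm_subC q x y : qcomm q x y - qcomm q y x = (q + q^-1) *: comm x y.
Proof.
rewrite qcommE qcommEC [comm y x]commC opprD addrACA subrr add0r.
by rewrite scalerN opprK -scalerDl addrC.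
Qed.

Lemma comm_qcomm q x y z :
  comm z (qcomm q x y) = qcomm q (comm z x) y + qcomm q x (comm z y).
Proof.
rewrite /qcomm commBr !commZr !commMr !scalerDr opprD.
by rewrite [X in _ + X = _]addrC addrACA.
Qed.

Lemma comm_comm x y z : comm z (comm x y) = comm (comm z x) y + comm x (comm z y).
Proof. by rewrite -[comm x y]qcomm1 comm_qcomm !qcomm1. Qed.

Lemma qcomm_eq0_mul q x y : q - q^-1 != 0 -> q + q^-1 != 0 ->
  qcomm q x y = 0 -> qcomm q y x = 0 -> x * y = 0.
Proof.
move=> hqm hqp exy eyx.
have /eqP : qcomm q x y - qcomm q y x = 0 by rewrite exy eyx subrr.
rewrite qcomm_subC scaler_eq0 (negbTE hqp) /= => /eqP cxy.
by move/eqP: exy; rewrite qcommE cxy scaler0 addr0 scaler_eq0 (negbTE hqm) => /eqP.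
Qed.

Lemma qcomm_comm_assoc q x y z :
  comm y z = 0 -> qcomm q y (comm x z) = comm (qcomm q y x) z.
Proof.
move=> cyz; rewrite /qcomm commBl !commZl !commMl cyz.
by rewrite mul0r mulr0 addr0 add0r.
Qed.

Lemma qcomm_delta q x y : q != 0 -> qcomm q y x = - (q *: (q ^- 2 *: (x * y) - y * x)).
Proof.
move=> hq; rewrite scalerBr scalerA opprB /qcomm; congr (_ - _ *: _).
by rewrite expr2 invfM mulrA mulfV ?mul1r.
Qed.

Lemma comm_eq_qcomm q x y c : q + q^-1 != 0 ->
  qcomm q x y = qcomm q y (x + (q + q^-1) *: c) -> comm x y = qcomm q y c.
Proof.
move=> hqp; rewrite qcommDr qcommZr => /(congr1 (fun v => v - qcomm q y x)).
rewrite qcomm_subC addrAC subrr add0r; exact: scalerI.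
Qed.
End Commutators.

Definition kappa {F : fieldType} (q : F) (k : nat) : F :=
  - (q - q^-1)^-1 * (q + q^-1) ^- (k + 2).

Section Scalars.
Context {F : fieldType} {q : F}.
Hypotheses (hq : q != 0) (hq4 : q ^+ 4 != 1).

Lemma sqrsqr_sub1_neq0 : (q * q) ^+ 2 - 1 != 0.
Proof. by rewrite -expr2 -exprM subr_eq0. Qed.

Lemma sqr_sub1_add1_neq0 : (q * q - 1 != 0) && (q * q + 1 != 0).
Proof.
rewrite -negb_or -mulf_eq0.
have -> : (q * q - 1) * (q * q + 1) = (q * q) ^+ 2 - 1 by ring.
exact: sqrsqr_sub1_neq0.
Qed.

Lemma sqr_sub1_neq0 : q * q - 1 != 0.
Proof. by case/andP: sqr_sub1_add1_neq0. Qed.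

Lemma sqr_add1_neq0 : q * q + 1 != 0.
Proof. by case/andP: sqr_sub1_add1_neq0. Qed.

Lemma sub_inv_neq0 : q - q^-1 != 0.
Proof.
have -> : q - q^-1 = (q * q - 1) / q by field.
by rewrite mulf_neq0 ?invr_eq0 ?sqr_sub1_neq0.
Qed.

Lemma add_inv_neq0 : q + q^-1 != 0.
Proof.
have -> : q + q^-1 = (q * q + 1) / q by field.
by rewrite mulf_neq0 ?invr_eq0 ?sqr_add1_neq0.
Qed.

Lemma qint2E : qint q 2 = q + q^-1.
Proof. by rewrite /qint; field; rewrite hq sqr_sub1_neq0. Qed.

Lemma rho_inv : (rho q)^-1 = - (q^-1 / (q + q^-1)) * cB q.
Proof.
rewrite /rho /cB; field.
by rewrite oppr_eq0 expf_eq0 /= hq sqrsqr_sub1_neq0 sqr_sub1_neq0 sqr_add1_neq0.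
Qed.

Lemma rho_neq0 : rho q != 0.
Proof.
rewrite /rho oppr_eq0 expf_eq0 /=.
have -> : q ^+ 2 - q ^- 2 = ((q * q) ^+ 2 - 1) / q ^+ 2 by field.
by rewrite mulf_neq0 ?sqrsqr_sub1_neq0 ?invr_eq0 ?expf_neq0.
Qed.

Lemma Gc0_rho_inv : (- (q - q^-1) * qint q 2 ^+ 2) * ((rho q)^-1 * (q - q^-1)) = 1.
Proof.
by rewrite qint2E /rho; field; rewrite hq oppr_eq0 expf_eq0 /= sqrsqr_sub1_neq0.
Qed.

Lemma kappa0 : kappa q 0 = (rho q)^-1 * (q - q^-1).
Proof.
rewrite /kappa /rho; field.
by rewrite hq oppr_eq0 expf_eq0 /= sqrsqr_sub1_neq0 sqr_add1_neq0 sqr_sub1_neq0.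
Qed.

Lemma kappaS k : kappa q k.+1 = kappa q k / (q + q^-1).
Proof. by rewrite /kappa addSn exprS invfM mulrA mulrAC. Qed.
End Scalars.

Lemma sum_binS (R : pzRingType) (V : lmodType R) m (f : nat -> V) :
  \sum_(0 <= l < m.+2) 'C(m.+1, l)%:R *: f l =
  \sum_(0 <= l < m.+1) 'C(m, l)%:R *: (f l + f l.+1).
Proof.
rewrite big_nat_recl // bin0.
under eq_bigr do rewrite binS natrD scalerDl.
rewrite big_split /= addrA.
under [in RHS]eq_bigr do rewrite scalerDr.
rewrite big_split /=; congr (_ + _).
transitivity (\sum_(0 <= l < m.+2) 'C(m, l)%:R *: f l).
  by rewrite [in RHS]big_nat_recl // bin0.
by rewrite big_nat_recr //= bin_small // scale0r addr0.
Qed.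

Section BinomialSums.
Context {F : fieldType} {A : algType F} (q : F) (W : int -> A).
Local Notation Bt0 := (Bt0 q W).
Local Notation Delta := (Bdelta q W).

Lemma Bt0_rec (j : int) : Bt0 (j + 1) = Bt0 (j - 1) + cB q *: comm Delta (Bt0 j).
Proof.
case: j => [[|n]|[|n]] //.
- have -> : n.+1%:Z + 1 = n.+2 by lia.
  have -> : n.+1%:Z - 1 = n by lia.
  by [].
- by rewrite /= subrK.
- have -> : Negz n.+1 + 1 = Negz n by rewrite !NegzE; lia.
  have -> : Negz n.+1 - 1 = Negz n.+2 by rewrite !NegzE; lia.
  by rewrite /= subrK.
Qed.

Lemma Bt1_Bt0 (z : int) : Bt1 q W z = Bt0 (- z - 1).
Proof.
case: z => n.
- by have -> : - n%:Z - 1 = Negz n by rewrite NegzE; lia.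
- by have -> : - Negz n - 1 = n by rewrite NegzE; lia.
Qed.

Lemma Bt0_mul_eq0 (h : A) : W 0 * h = 0 -> W 1 * h = 0 -> forall j, Bt0 j * h = 0.
Proof.
move=> h0 h1.
have hD : Delta * h = 0.
  by rewrite /Bdelta mulrBl -scalerAl -!mulrA h0 h1 !mulr0 scaler0 subrr.
have hC Y : Y * h = 0 -> comm Delta Y * h = 0.
  by move=> hY; rewrite /comm mulrBl -!mulrA hY hD !mulr0 subrr.
have hB0 n : B0 q W n * h = 0 /\ B0 q W n.+1 * h = 0.
  elim: n => [|n [IH1 IH2]] /=; split=> //;
    by rewrite mulrDl -scalerAl hC ?scaler0 ?addr0.
have hB1 n : B1 q W n * h = 0 /\ B1 q W n.+1 * h = 0.
  elim: n => [|n [IH1 IH2]] /=; split=> //;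
    by rewrite mulrBl -scalerAl hC ?scaler0 ?subr0.
by case=> n; [case: (hB0 n) | case: (hB1 n)].
Qed.

Definition Bbinom (m : nat) (s : int) : A :=
  \sum_(0 <= l < m.+1) ('C(m, l)%:R * q ^ (m%:Z - 2 * l%:Z)) *: Bt0 (m%:Z - 2 * l%:Z + s).

Lemma Bbinom0 s : Bbinom 0 s = Bt0 s.
Proof. by rewrite /Bbinom big_nat1 mul1r expr0z scale1r add0r. Qed.

Lemma Bbinom_mul_eq0 (h : A) m s : W 0 * h = 0 -> W 1 * h = 0 -> Bbinom m s * h = 0.
Proof.
move=> h0 h1; rewrite /Bbinom mulr_suml big1 // => l _.
by rewrite -scalerAl Bt0_mul_eq0 ?scaler0.
Qed.

Lemma comm_Bdelta_Bbinom m s :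
  cB q *: comm Delta (Bbinom m s) = Bbinom m (s + 1) - Bbinom m (s - 1).
Proof.
rewrite /Bbinom comm_sumr scaler_sumr -sumrB; apply: eq_bigr => l _.
rewrite commZr scalerA mulrC -[in LHS]scalerA -scalerBr; congr (_ *: _).
by rewrite !addrA Bt0_rec [RHS]addrC addKr.
Qed.

Lemma BbinomS m s : q != 0 ->
  Bbinom m.+1 s = q *: Bbinom m (s + 1) + q^-1 *: Bbinom m (s - 1).
Proof.
move=> hq; rewrite /Bbinom.
pose T l := q ^ (m.+1%:Z - 2 * l%:Z) *: Bt0 (m.+1%:Z - 2 * l%:Z + s).
rewrite (eq_bigr (fun l => 'C(m.+1, l)%:R *: T l)) => [|l _]; last by rewrite scalerA.
rewrite sum_binS; under eq_bigr do rewrite scalerDr.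
rewrite big_split /= !scaler_sumr; congr (_ + _); apply: eq_bigr => l _.
- rewrite /T !scalerA mulrCA (_ : m.+1%:Z - 2 * l%:Z = 1 + (m%:Z - 2 * l%:Z)); last lia.
  by rewrite [in LHS]expfzDr //; congr (_ *: Bt0 _); lia.
- rewrite /T !scalerA mulrCA (_ : m.+1%:Z - 2 * l.+1%:Z = -1 + (m%:Z - 2 * l%:Z)); last lia.
  by rewrite [in LHS]expfzDr // exprN1; congr (_ *: Bt0 _); lia.
Qed.

Lemma Bbinom_Bt1 m :
  Bbinom m (-1) =
  \sum_(0 <= l < m.+1) ('C(m, l)%:R * q ^ (2 * l%:Z - m%:Z)) *: Bt1 q W (m%:Z - 2 * l%:Z).
Proof.
rewrite /Bbinom big_nat_rev /=; apply: eq_big_nat => l /andP [_ hl].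
rewrite add0n subSS Bt1_Bt0 bin_sub //.
have -> : m%:Z - 2 * (m - l)%N%:Z = 2 * l%:Z - m%:Z by lia.
by have -> : - (m%:Z - 2 * l%:Z) - 1 = 2 * l%:Z - m%:Z - 1 by lia.
Qed.
End BinomialSums.

Section Expansion.
Context {F : fieldType} {A : algType F} (q : F) (W : int -> A).
Hypotheses (hq : q != 0) (hq4 : q ^+ 4 != 1).
Local Notation Delta := (Bdelta q W).

Definition Xpos (k : nat) : A := kappa q k *: Bbinom q W k 0.
Definition Xneg (k : nat) : A := kappa q k *: Bbinom q W k (-1).

Lemma rho_inv_comm_Bbinom m s :
  (rho q)^-1 *: comm Delta (Bbinom q W m s) =
  - (q^-1 / (q + q^-1)) *: (Bbinom q W m (s + 1) - Bbinom q W m (s - 1)).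
Proof. by rewrite rho_inv // -scalerA comm_Bdelta_Bbinom. Qed.

Lemma XnegS k : Xneg k.+1 = Xpos k + (rho q)^-1 *: comm Delta (Xneg k).
Proof.
rewrite /Xneg /Xpos BbinomS // kappaS -[in LHS]scalerA commZr [in RHS]scalerA.
rewrite [_ * kappa q k]mulrC -(scalerA (kappa q k)) rho_inv_comm_Bbinom -scalerDr.
congr (_ *: _).
rewrite (_ : -1 + 1 = 0 :> int) // (_ : -1 - 1 = -2 :> int) //.
move: (Bbinom q W k 0) (Bbinom q W k (-2)) => u w.
rewrite -[in RHS](scale1r u) scalerBr !scalerA addrA -scalerDl -scaleNr scalerDr !scalerA.
by congr (_ *: _ + _ *: _); field; rewrite hq sqr_add1_neq0.
Qed.

Lemma XposS k : Xpos k.+1 = Xneg k - ((rho q)^-1 * q ^+ 2) *: comm Delta (Xpos k).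
Proof.
rewrite /Xneg /Xpos BbinomS // kappaS -[in LHS]scalerA commZr [in RHS]scalerA.
rewrite mulrC -(scalerA (kappa q k)) [_ * q ^+ 2]mulrC -(scalerA (q ^+ 2)) rho_inv_comm_Bbinom.
rewrite -scalerBr; congr (_ *: _).
rewrite (_ : 0 + 1 = 1 :> int) // (_ : 0 - 1 = -1 :> int) //.
move: (Bbinom q W k 1) (Bbinom q W k (-1)) => u w.
rewrite -[in RHS](scale1r w) scalerA scalerBr !scalerA opprB addrA -scalerDl addrC -scaleNr.
rewrite scalerDr !scalerA.
by congr (_ *: _ + _ *: _); field; rewrite hq sqr_add1_neq0.
Qed.

Lemma Xpos_mul_eq0 k h : W 0 * h = 0 -> W 1 * h = 0 -> Xpos k * h = 0.
Proof. by move=> h0 h1; rewrite /Xpos -scalerAl Bbinom_mul_eq0 ?scaler0. Qed.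

Lemma Xneg_mul_eq0 k h : W 0 * h = 0 -> W 1 * h = 0 -> Xneg k * h = 0.
Proof. by move=> h0 h1; rewrite /Xneg -scalerAl Bbinom_mul_eq0 ?scaler0. Qed.

Lemma Xpos0 : Xpos 0 = ((rho q)^-1 * (q - q^-1)) *: W 1.
Proof. by rewrite /Xpos Bbinom0 kappa0. Qed.

Lemma Xneg0 : Xneg 0 = ((rho q)^-1 * (q - q^-1)) *: W 0.
Proof. by rewrite /Xneg Bbinom0 kappa0. Qed.

Lemma Xpos_mulE k (Y : A) : Xpos k * Y =
  - (q - q^-1)^-1 *: \sum_(0 <= l < k.+1)
      ('C(k, l)%:R * q ^ (k%:Z - 2 * l%:Z) * (qint q 2 ^+ (k + 2))^-1)
        *: (Bt0 q W (k%:Z - 2 * l%:Z) * Y).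
Proof.
rewrite /Xpos /Bbinom -scalerAl mulr_suml !scaler_sumr; apply: eq_bigr => l _.
by rewrite addr0 -scalerAl !scalerA /kappa qint2E //; congr (_ *: _); ring.
Qed.

Lemma Xneg_mulE k (Y : A) : Xneg k * Y =
  - (q - q^-1)^-1 *: \sum_(0 <= l < k.+1)
      ('C(k, l)%:R * q ^ (2 * l%:Z - k%:Z) * (qint q 2 ^+ (k + 2))^-1)
        *: (Bt1 q W (k%:Z - 2 * l%:Z) * Y).
Proof.
rewrite /Xneg Bbinom_Bt1 -scalerAl mulr_suml !scaler_sumr; apply: eq_bigr => l _.
by rewrite -scalerAl !scalerA /kappa qint2E //; congr (_ *: _); ring.
Qed.
End Expansion.

Section Oq.
Context {F : fieldType} {A : algType F} {q : F} {W : int -> A} {G Gt : nat -> A}.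
Hypotheses (hq : q != 0) (hq4 : q ^+ 4 != 1) (HO : Oq_relations q W G Gt).
Local Notation Delta := (Bdelta q W).

Lemma comm_W0_Wpos k : comm (W 0) (W k.+1%:Z) = (q + q^-1)^-1 *: (Gt k.+1 - G k.+1).
Proof. by have := HO k 0; tauto. Qed.

Lemma comm_Wneg_W1 k : comm (W (- k%:Z)) (W 1) = (q + q^-1)^-1 *: (Gt k.+1 - G k.+1).
Proof. by have := HO k 0; tauto. Qed.

Lemma qcomm_W0_G k : qcomm q (W 0) (G k.+1) = rho q *: W (- k.+1%:Z) - rho q *: W k.+1%:Z.
Proof. by have := HO k 0; tauto. Qed.

Lemma qcomm_Gt_W0 k : qcomm q (Gt k.+1) (W 0) = rho q *: W (- k.+1%:Z) - rho q *: W k.+1%:Z.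
Proof. by have := HO k 0; tauto. Qed.

Lemma qcomm_G_W1 k : qcomm q (G k.+1) (W 1) = rho q *: W k.+2%:Z - rho q *: W (- k%:Z).
Proof. by have := HO k 0; tauto. Qed.

Lemma qcomm_W1_Gt k : qcomm q (W 1) (Gt k.+1) = rho q *: W k.+2%:Z - rho q *: W (- k%:Z).
Proof. by have := HO k 0; tauto. Qed.

Lemma comm_W0_Wneg k : comm (W 0) (W (- k%:Z)) = 0.
Proof.
have : comm (W (- k%:Z)) (W (- 0%:Z)) = 0 by have := HO k 0; tauto.
by rewrite commC => /eqP; rewrite oppr_eq0 => /eqP.
Qed.

Lemma comm_W1_Wpos k : comm (W 1) (W k.+1%:Z) = 0.
Proof.
have : comm (W k.+1%:Z) (W 1) = 0 by have := HO k 0; tauto.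
by rewrite commC => /eqP; rewrite oppr_eq0 => /eqP.
Qed.

Lemma comm_G_W0 k : comm (G k.+1) (W 0) = comm (G 1) (W (- k%:Z)).
Proof.
have : comm (W (- k%:Z)) (G 1) + comm (G k.+1) (W (- 0%:Z)) = 0 by have := HO k 0; tauto.
by rewrite commC addrC => /eqP; rewrite subr_eq0 => /eqP.
Qed.

Lemma comm_Gt_W0 k : comm (Gt k.+1) (W 0) = comm (Gt 1) (W (- k%:Z)).
Proof.
have : comm (W (- k%:Z)) (Gt 1) + comm (Gt k.+1) (W (- 0%:Z)) = 0 by have := HO k 0; tauto.
by rewrite commC addrC => /eqP; rewrite subr_eq0 => /eqP.
Qed.

Lemma comm_G_W1 k : comm (G k.+1) (W 1) = comm (G 1) (W k.+1%:Z).
Proof.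
have : comm (W k.+1%:Z) (G 1) + comm (G k.+1) (W 1) = 0 by have := HO k 0; tauto.
by rewrite commC addrC => /eqP; rewrite subr_eq0 => /eqP.
Qed.

Lemma comm_G1_G k : comm (G 1) (G k.+1) = 0.
Proof. by have := HO 0 k; tauto. Qed.

Let hqp : q + q^-1 != 0 := add_inv_neq0 hq hq4.

Let Zc := G 1%N + q *: Delta.

Lemma Zc_Gt : Zc = Gt 1%N - qcomm q (W 0) (W 1).
Proof.
have e := qcomm_subC q (W 0) (W 1).
rewrite comm_W0_Wpos scalerA mulfV // scale1r in e.
have -> : Gt 1%N = G 1%N + (qcomm q (W 0) (W 1) - qcomm q (W 1) (W 0)).
  by rewrite e addrC subrK.
by rewrite addrAC subrKA /Zc -[q *: _]opprK -qcomm_delta.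
Qed.

Lemma comm_G_W1_qcomm k : comm (G k.+1) (W 1) = comm (qcomm q (W 1) (W 0)) (W k.+1%:Z).
Proof.
rewrite -qcomm_comm_assoc ?comm_W1_Wpos //.
apply: comm_eq_qcomm => //.
rewrite qcomm_G_W1 -qcomm_W1_Gt; congr (qcomm q (W 1) _).
by rewrite comm_W0_Wpos scalerA mulfV // scale1r addrC subrK.
Qed.

Lemma comm_Gt_W0_qcomm k : comm (Gt k.+1) (W 0) = comm (qcomm q (W 0) (W 1)) (W (- k%:Z)).
Proof.
rewrite -qcomm_comm_assoc ?comm_W0_Wneg //.
apply: comm_eq_qcomm => //.
rewrite qcomm_Gt_W0 -qcomm_W0_G; congr (qcomm q (W 0) _).
by rewrite commC comm_Wneg_W1 -scalerN opprB scalerA mulfV // scale1r addrC subrK.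
Qed.

Lemma comm_Zc_Wpos k : comm Zc (W k.+1%:Z) = 0.
Proof.
rewrite /Zc -[q *: _]opprK -qcomm_delta // commBl -comm_G_W1.
by rewrite comm_G_W1_qcomm subrr.
Qed.

Lemma comm_Zc_Wneg k : comm Zc (W (- k%:Z)) = 0.
Proof. by rewrite Zc_Gt commBl -comm_Gt_W0 comm_Gt_W0_qcomm subrr. Qed.

Lemma comm_Zc_W z : comm Zc (W z) = 0.
Proof.
case: z => [[|k]|k]; first exact: (comm_Zc_Wneg 0); first exact: comm_Zc_Wpos.
by rewrite NegzE comm_Zc_Wneg.
Qed.

Lemma comm_G1_W z : comm (G 1%N) (W z) = - q *: comm Delta (W z).
Proof.
apply/eqP; rewrite scaleNr -subr_eq0 opprK -commZl -commDl.
by rewrite -/Zc comm_Zc_W.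
Qed.

Lemma W_pos_rec k : W k.+2%:Z = W (- k%:Z) +
  ((rho q)^-1 * (q - q^-1)) *: (W 1 * G k.+1) - ((rho q)^-1 * q ^+ 2) *: comm Delta (W k.+1%:Z).
Proof.
have e := qcomm_G_W1 k.
rewrite qcommEC comm_G_W1 comm_G1_W -scalerBr in e.
have -> : W k.+2%:Z = W (- k%:Z) + (rho q)^-1 *: (rho q *: (W k.+2%:Z - W (- k%:Z))).
  by rewrite scalerA mulVf ?rho_neq0 // scale1r addrC subrK.
by rewrite -e scalerDr !scalerA addrA mulrN scaleNr -mulrA -expr2.
Qed.

Lemma W_neg_rec k : W (- k.+1%:Z) = W k.+1%:Z +
  ((rho q)^-1 * (q - q^-1)) *: (W 0 * G k.+1) + (rho q)^-1 *: comm Delta (W (- k%:Z)).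
Proof.
have e := qcomm_W0_G k.
rewrite qcommE commC comm_G_W0 comm_G1_W scaleNr opprK -scalerBr in e.
have -> : W (- k.+1%:Z) = W k.+1%:Z + (rho q)^-1 *: (rho q *: (W (- k.+1%:Z) - W k.+1%:Z)).
  by rewrite scalerA mulVf ?rho_neq0 // scale1r addrC subrK.
by rewrite -e scalerDr !scalerA addrA divfK.
Qed.

Lemma W_mul_comm_Bdelta_G k : W 0 * comm Delta (G k.+1) = 0 /\ W 1 * comm Delta (G k.+1) = 0.
Proof.
set Hz := comm Zc (G k.+1).
have eHz : Hz = q *: comm Delta (G k.+1) by rewrite /Hz /Zc commDl comm_G1_G add0r commZl.
have eHzt : comm Zc (Gt k.+1) = Hz.
  rewrite -[Gt k.+1](subrK (G k.+1)) -[Gt _ - _](scalerKV hqp) -comm_W0_Wpos.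
  by rewrite commDr commZr comm_comm !comm_Zc_W comm0l comm0r addr0 scaler0 add0r.
have hZrel a b : comm Zc (rho q *: W a - rho q *: W b) = 0.
  by rewrite commBr !commZr !comm_Zc_W scaler0 subrr.
have e3 : qcomm q (W 0) Hz = 0.
  by have := congr1 (comm Zc) (qcomm_W0_G k); rewrite comm_qcomm comm_Zc_W qcomm0l add0r hZrel.
have e4 : qcomm q Hz (W 0) = 0.
  have := congr1 (comm Zc) (qcomm_Gt_W0 k).
  by rewrite comm_qcomm comm_Zc_W qcomm0r addr0 eHzt hZrel.
have e5 : qcomm q Hz (W 1) = 0.
  by have := congr1 (comm Zc) (qcomm_G_W1 k); rewrite comm_qcomm comm_Zc_W qcomm0r addr0 hZrel.
have e6 : qcomm q (W 1) Hz = 0.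
  have := congr1 (comm Zc) (qcomm_W1_Gt k).
  by rewrite comm_qcomm comm_Zc_W qcomm0l add0r eHzt hZrel.
have hqm : q - q^-1 != 0 := sub_inv_neq0 hq hq4.
by split; apply: (scalerI hq); rewrite scaler0 scalerAr -eHz; apply: qcomm_eq0_mul hqm hqp _ _.
Qed.

Lemma comm_Bdelta_conv (X : nat -> A) n :
  (forall k h, W 0 * h = 0 -> W 1 * h = 0 -> X k * h = 0) ->
  comm Delta (\sum_(0 <= k < n.+1) X k * Gc q G (n - k)) =
  \sum_(0 <= k < n.+1) comm Delta (X k) * Gc q G (n - k).
Proof.
move=> hX; rewrite comm_sumr; apply: eq_bigr => k _; rewrite commMr.
case: (n - k)%N => [|m] /=; first by rewrite comm_scalar mulr0 addr0.
by have [h0 h1] := W_mul_comm_Bdelta_G m; rewrite hX ?addr0.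
Qed.

Lemma W_expansion n :
  W n.+1%:Z = \sum_(0 <= k < n.+1) Xpos q W k * Gc q G (n - k) /\
  W (- n%:Z) = \sum_(0 <= k < n.+1) Xneg q W k * Gc q G (n - k).
Proof.
elim: n => [|n [Hp Hm]].
  rewrite !big_nat1 /= Xpos0 // Xneg0 // !mulr_algr !scalerA Gc0_rho_inv // !scale1r.
  by split.
split.
- rewrite W_pos_rec // big_nat_recl // subn0 Xpos0 // -scalerAl.
  under eq_bigr do rewrite subSS XposS // mulrBl -(scalerAl ((rho q)^-1 * q ^+ 2)).
  rewrite sumrB -Hm -scaler_sumr -comm_Bdelta_conv; last exact: Xpos_mul_eq0.
  by rewrite -Hp addrA [_ *: _ + W _]addrC.
- rewrite W_neg_rec // big_nat_recl // subn0 Xneg0 // -scalerAl.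
  under eq_bigr do rewrite subSS XnegS // mulrDl -(scalerAl (rho q)^-1).
  rewrite big_split /= -Hp -scaler_sumr -comm_Bdelta_conv; last exact: Xneg_mul_eq0.
  by rewrite -Hm addrA [_ *: _ + W _]addrC.
Qed.
End Oq.

Theorem proposition12p3 (F : fieldType) (A : algType F) (q : F)
  (W : int -> A) (G Gt : nat -> A) :
  q != 0 -> qnot_root_of_unity q -> Oq_relations q W G Gt ->
  forall n : nat,
    W n.+1%:Z =
      - (q - q^-1)^-1 *:
        \sum_(0 <= k < n.+1) \sum_(0 <= l < k.+1)
          ('C(k, l)%:R * q ^ (k%:Z - 2 * l%:Z) * (qint q 2 ^+ (k + 2))^-1)
            *: (Bt0 q W (k%:Z - 2 * l%:Z) * Gc q G (n - k))
    /\
    W (- n%:Z) =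
      - (q - q^-1)^-1 *:
        \sum_(0 <= k < n.+1) \sum_(0 <= l < k.+1)
          ('C(k, l)%:R * q ^ (2 * l%:Z - k%:Z) * (qint q 2 ^+ (k + 2))^-1)
            *: (Bt1 q W (k%:Z - 2 * l%:Z) * Gc q G (n - k)).
Proof.
move=> hq hr HO n; have hq4 : q ^+ 4 != 1 := hr 4 isT.
have [-> ->] := W_expansion hq hq4 HO n.
by split; rewrite scaler_sumr; apply: eq_bigr => k _; rewrite ?Xpos_mulE ?Xneg_mulE.
Qed.
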